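(* Let $a\in\mathbb{N}_0$ and $b\notin\mathbb{Z}$, and let $\rho(x;a,b)$ be the unique quasi-rational antiderivative of $(1-x)^a(1+x)^b$ belonging to $(1+x)^{b+1}\mathcal{Q}_\pm$. Then $\rho(1;a,b)=\nu(a,b)$, where $\nu(a,b)=2^{1+a+b}\frac{\Gamma(a+1)\Gamma(b+1)}{\Gamma(a+b+2)}$.
   Context: $\mathcal{Q}_\pm$ is the set of rational functions regular at $x=1$ and $x=-1$. A function is quasi-rational if its logarithmic derivative is rational. *)

From Stdlib Require Import Reals ZArith List.
From Coquelicot Require Import Coquelicot.
Open Scope R_scope.

Fixpoint peval (p : list R) (x : R) : R :=
  match p with
  | nil => 0
  | c :: p' => c + x * peval p' x
  end.

Definition Gamma_pos (x : R) : R :=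
  RInt_gen (fun t => Rpower t (x - 1) * exp (- t)) (at_right 0) (Rbar_locally p_infty).

(* Gamma function on all reals (meaningful off the non-positive integers), by the
   standard continuation  Gamma x = Gamma (x+n) / (x (x+1) ... (x+n-1))  with n
   chosen so that x + n > 0. *)
Definition Gamma (x : R) : R :=
  let n := Z.to_nat (up (Rabs x)) in
  Gamma_pos (x + INR n) / fold_right Rmult 1 (map (fun k => x + INR k) (seq 0 n)).

Definition nu (a : nat) (b : R) : R :=
  Rpower 2 (1 + INR a + b) * Gamma (INR a + 1) * Gamma (b + 1) / Gamma (INR a + b + 2).

(* The candidate function rho(x) = (1+x)^(b+1) * P(x)/Q(x), an element of
   (1+x)^(b+1) Q_pm when Q(1) <> 0 and Q(-1) <> 0. *)
Definition rho_of (P Q : list R) (b x : R) : R :=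
  Rpower (1 + x) (b + 1) * (peval P x / peval Q x).

Definition antideriv_rep (a : nat) (b : R) (P Q : list R) : Prop :=
  peval Q 1 <> 0 /\ peval Q (-1) <> 0 /\
  forall x : R, -1 < x < 1 -> peval Q x <> 0 ->
    is_derive (rho_of P Q b) x ((1 - x) ^ a * Rpower (1 + x) b).

(* For a = 0 the antiderivative is (1 + x)^(b+1) / (b + 1); integrating by parts against
   (1 + x)^b dx lowers a by one and raises b by one, so rho = (1 + x)^(b+1) q with an explicit
   polynomial q, and at x = 1 this recursion becomes nu(a+1, b) = (a+1)/(b+1) nu(a, b+1),
   which is Gamma(x + 1) = x Gamma(x).  Any other antiderivative (1 + x)^(b+1) P/Q with
   Q(-1) <> 0 differs from rho by a constant C near -1, so P - q Q = C (1 + x)^(-(b+1)) Q there.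
   Since b is not an integer, dividing out the root -1 of the polynomial P - q Q repeatedly
   reaches a negative exponent, where letting x -> -1 forces C = 0; hence P = q Q. *)

From Stdlib Require Import Reals ZArith List Lra Lia Classical.
From Coquelicot Require Import Coquelicot.
Open Scope R_scope.

Fixpoint padd (p q : list R) : list R :=
  match p, q with
  | nil, _ => q
  | _, nil => p
  | a :: p', b :: q' => (a + b) :: padd p' q'
  end.

Lemma peval_padd p q x : peval (padd p q) x = peval p x + peval q x.
Proof.
  revert q; induction p as [|a p IH]; intros [|b q]; simpl; try ring.
  rewrite IH; ring.
Qed.

Lemma peval_scale c p x : peval (map (Rmult c) p) x = c * peval p x.
Proof. induction p as [|a p IH]; simpl; [|rewrite IH]; ring. Qed.

Fixpoint pmul (p q : list R) : list R :=
  match p with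
  | nil => nil
  | a :: p' => padd (map (Rmult a) q) (0 :: pmul p' q)
  end.

Lemma peval_pmul p q x : peval (pmul p q) x = peval p x * peval q x.
Proof.
  induction p as [|a p IH]; simpl; [ring|].
  rewrite peval_padd, peval_scale; simpl; rewrite IH; ring.
Qed.

Definition is_poly (f : R -> R) : Prop := exists p, forall x, f x = peval p x.

Lemma is_poly_const c : is_poly (fun _ => c).
Proof. exists (c :: nil); intros; simpl; ring. Qed.

Lemma is_poly_id : is_poly (fun x => x).
Proof. exists (0 :: 1 :: nil); intros; simpl; ring. Qed.

Lemma is_poly_plus f g : is_poly f -> is_poly g -> is_poly (fun x => f x + g x).
Proof.
  intros [p Hp] [q Hq]; exists (padd p q); intros x.
  rewrite peval_padd, Hp, Hq; reflexivity.
Qed.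

Lemma is_poly_minus f g : is_poly f -> is_poly g -> is_poly (fun x => f x - g x).
Proof.
  intros [p Hp] [q Hq]; exists (padd p (map (Rmult (-1)) q)); intros x.
  rewrite peval_padd, peval_scale, Hp, Hq; ring.
Qed.

Lemma is_poly_mult f g : is_poly f -> is_poly g -> is_poly (fun x => f x * g x).
Proof.
  intros [p Hp] [q Hq]; exists (pmul p q); intros x.
  rewrite peval_pmul, Hp, Hq; reflexivity.
Qed.

Lemma is_poly_pow f n : is_poly f -> is_poly (fun x => f x ^ n).
Proof.
  intros Hf; induction n as [|n IH]; simpl.
  - apply is_poly_const.
  - apply is_poly_mult; assumption.
Qed.

Lemma continuous_peval p x : continuous (peval p) x.
Proof.
  induction p as [|a p IH]; simpl.
  - apply continuous_const.
  - apply (continuous_plus (fun _ => a) (fun y => y * peval p y)); [apply continuous_const|].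
    apply (continuous_mult (fun y => y) (peval p)); [apply continuous_id | exact IH].
Qed.

Fixpoint ruffini (c : R) (p : list R) : list R :=
  match p with
  | nil | _ :: nil => nil
  | _ :: p' => peval p' c :: ruffini c p'
  end.

Lemma ruffini_cons c a p : p <> nil -> ruffini c (a :: p) = peval p c :: ruffini c p.
Proof. destruct p; [easy | reflexivity]. Qed.

Lemma peval_ruffini c p x : peval p x = peval p c + (x - c) * peval (ruffini c p) x.
Proof.
  induction p as [|a p IH]; [simpl; ring|].
  destruct p as [|a' p]; [simpl; ring|].
  rewrite ruffini_cons by discriminate.
  set (q := a' :: p) in *.
  change (a + x * peval q x =
          a + c * peval q c + (x - c) * (peval q c + x * peval (ruffini c q) x)).
  rewrite IH. ring.
Qed.

Lemma ruffini_length c p : length (ruffini c p) = pred (length p).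
Proof.
  induction p as [|a p IH]; [reflexivity|].
  destruct p as [|a' p]; [reflexivity|].
  rewrite ruffini_cons by discriminate. simpl in *. rewrite IH. reflexivity.
Qed.

Lemma peval_eq0_of_interval p c d : c < d ->
  (forall x, c < x < d -> peval p x = 0) -> forall x, peval p x = 0.
Proof.
  remember (length p) as n eqn:Hn. revert p Hn c d.
  induction n as [|n IH]; intros p Hn c d Hcd H x.
  - destruct p; [reflexivity | discriminate].
  - set (m := (c + d) / 2).
    assert (Hm : peval p m = 0) by (apply H; unfold m; lra).
    assert (E : forall y, peval p y = (y - m) * peval (ruffini m p) y).
    { intro y. rewrite (peval_ruffini m p y), Hm. ring. }
    rewrite E, (IH (ruffini m p)) with (c := c) (d := m); [ring | | unfold m; lra |].
    + rewrite ruffini_length, <- Hn. reflexivity.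
    + intros y Hy. specialize (H y ltac:(unfold m in *; lra)). rewrite E in H.
      apply Rmult_integral in H. destruct H; [unfold m in *; lra | assumption].
Qed.

(** * Non-integer powers of [1 + x] are not rational at [-1] *)

Lemma R_ball x e y : ball x e y <-> Rabs (y - x) < e.
Proof. split; intro H; exact H. Qed.

Lemma Rpower_gt0 x y : 0 < Rpower x y.
Proof. apply exp_pos. Qed.

Lemma Rpower_opp_mul x e : Rpower x (- e) * Rpower x e = 1.
Proof.
  unfold Rpower. rewrite <- exp_plus.
  replace (- e * ln x + e * ln x) with 0 by ring. apply exp_0.
Qed.

Lemma Rabs_lt_INR_up x : Rabs x < INR (Z.to_nat (up (Rabs x))).
Proof.
  destruct (archimed (Rabs x)) as [Hup _].
  assert (Hz : (0 <= up (Rabs x))%Z).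
  { apply le_IZR. pose proof (Rabs_pos x). lra. }
  rewrite INR_IZR_INZ, Z2Nat.id by exact Hz. exact Hup.
Qed.

Lemma exists_INR_gt x : exists n : nat, x < INR n.
Proof.
  exists (Z.to_nat (up (Rabs x))).
  pose proof (Rabs_lt_INR_up x). pose proof (Rle_abs x). lra.
Qed.

Lemma at_right_of_interval x d (P : R -> Prop) :
  0 < d -> (forall y, x < y < x + d -> P y) -> at_right x P.
Proof.
  intros Hd H. exists (mkposreal d Hd). intros y Hy Hxy. apply H.
  change (Rabs (y - x) < d) in Hy. apply Rabs_lt_between in Hy. lra.
Qed.

Lemma at_right_gt x : at_right x (fun y => x < y).
Proof. exists (mkposreal 1 Rlt_0_1). intros y _ Hy. exact Hy. Qed.

Lemma continuous_at_right (f : R -> R) x :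
  continuous f x -> filterlim f (at_right x) (locally (f x)).
Proof. intros H. eapply filterlim_filter_le_1; [apply filter_le_within | exact H]. Qed.

Lemma filterlim_Rmult {T} {F : (T -> Prop) -> Prop} {FF : Filter F} (f g : T -> R) l1 l2 :
  filterlim f F (locally l1) -> filterlim g F (locally l2) ->
  filterlim (fun x => f x * g x) F (locally (l1 * l2)).
Proof.
  intros H1 H2. apply (filterlim_comp_2 f g Rmult H1 H2).
  apply (filterlim_mult (K := R_AbsRing) l1 l2).
Qed.

Lemma at_right_limit_unique x (f g : R -> R) l1 l2 :
  at_right x (fun y => f y = g y) ->
  filterlim f (at_right x) (locally l1) -> filterlim g (at_right x) (locally l2) -> l1 = l2.
Proof.
  intros Hfg H1 H2. apply (filterlim_ext_loc _ _ Hfg) in H1.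
  exact (filterlim_locally_unique g l1 l2 H1 H2).
Qed.

Lemma filterlim_Rpower_at_right c e :
  0 < e -> filterlim (fun x => Rpower (x - c) e) (at_right c) (locally 0).
Proof.
  intros He. apply filterlim_locally. intros eps.
  apply (at_right_of_interval _ (Rpower eps (/ e))); [apply Rpower_gt0|]. intros y Hy.
  apply R_ball. rewrite Rminus_0_r, Rabs_pos_eq by (left; apply Rpower_gt0).
  replace (pos eps) with (Rpower (Rpower eps (/ e)) e).
  - apply Rlt_Rpower_l; lra.
  - rewrite Rpower_mult, Rinv_l by lra. apply Rpower_1, cond_pos.
Qed.

Lemma filterlim_Rpower_1plus e :
  0 < e -> filterlim (fun x => Rpower (1 + x) e) (at_right (-1)) (locally 0).
Proof.
  intros He. eapply filterlim_ext; [| exact (filterlim_Rpower_at_right (-1) e He)].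
  intros x. cbv beta. f_equal. ring.
Qed.

Section NonRational.

Variables (N Q : list R) (C e : R).
Hypothesis HNQ : at_right (-1) (fun x => peval N x = C * Rpower (1 + x) e * peval Q x).

Lemma poly_eq_Rpower_neg_coef0 : e < 0 -> peval Q (-1) <> 0 -> C = 0.
Proof.
  intros He HQ.
  assert (L : C * peval Q (-1) = 0 * peval N (-1)).
  { apply (at_right_limit_unique (-1) (fun x => C * peval Q x)
             (fun x => Rpower (1 + x) (- e) * peval N x)).
    - revert HNQ. apply filter_imp. intros x ->.
      transitivity (C * peval Q x * (Rpower (1 + x) (- e) * Rpower (1 + x) e)); [| ring].
      rewrite Rpower_opp_mul. ring.
    - apply filterlim_Rmult; [apply filterlim_const | apply continuous_at_right, continuous_peval].
    - apply filterlim_Rmult; [apply filterlim_Rpower_1plus; lra |].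
      apply continuous_at_right, continuous_peval. }
  rewrite Rmult_0_l in L. apply Rmult_integral in L. tauto.
Qed.

Lemma poly_eq_Rpower_pos_root : 0 < e -> peval N (-1) = 0.
Proof.
  intros He.
  rewrite (at_right_limit_unique (-1) (peval N) (fun x => C * Rpower (1 + x) e * peval Q x)
             (peval N (-1)) (C * 0 * peval Q (-1))); [ring | exact HNQ | |].
  - apply continuous_at_right, continuous_peval.
  - apply filterlim_Rmult; [apply filterlim_Rmult |].
    + apply filterlim_const.
    + apply filterlim_Rpower_1plus, He.
    + apply continuous_at_right, continuous_peval.
Qed.

End NonRational.

Lemma poly_eq_Rpower_coef0 N Q C e : (forall z, e <> IZR z) -> peval Q (-1) <> 0 ->
  at_right (-1) (fun x => peval N x = C * Rpower (1 + x) e * peval Q x) -> C = 0.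
Proof.
  intros He HQ HNQ. destruct (exists_INR_gt e) as [n Hn].
  revert N e He HNQ Hn. induction n as [|n IH]; intros N e He HNQ Hn.
  - exact (poly_eq_Rpower_neg_coef0 N Q C e HNQ Hn HQ).
  - destruct (Rlt_or_le e 0) as [Hneg | Hnneg].
    { exact (poly_eq_Rpower_neg_coef0 N Q C e HNQ Hneg HQ). }
    assert (Hpos : 0 < e).
    { destruct Hnneg as [Hpos | Hz]; [exact Hpos | destruct (He 0%Z); symmetry; exact Hz]. }
    pose proof (poly_eq_Rpower_pos_root N Q C e HNQ Hpos) as HN1.
    (* [N = (1 + x) (ruffini (-1) N)], and one factor [1 + x] cancels. *)
    apply (IH (ruffini (-1) N) (e - 1)).
    + intros z Hz. apply (He (z + 1)%Z). rewrite plus_IZR, <- Hz. ring.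
    + generalize (filter_and _ _ HNQ (at_right_gt (-1))). apply filter_imp.
      intros x [Hx Hgt]. rewrite (peval_ruffini (-1)), HN1 in Hx.
      replace e with (e - 1 + 1) in Hx by ring.
      rewrite Rpower_plus, Rpower_1 in Hx by lra.
      apply Rmult_eq_reg_l with (1 + x); [| lra].
      replace (x - -1) with (1 + x) in Hx by ring. lra.
    + rewrite S_INR in Hn. lra.
Qed.

(** * The explicit antiderivative *)

Definition not_nonpos_int (x : R) : Prop := forall k : nat, x + INR k <> 0.

Lemma not_nonpos_int_neq0 x : not_nonpos_int x -> x <> 0.
Proof. intros Hx. rewrite <- (Rplus_0_r x). exact (Hx 0%nat). Qed.

Lemma not_nonpos_int_add_nat x n : not_nonpos_int x -> not_nonpos_int (x + INR n).
Proof. intros Hx k. rewrite Rplus_assoc, <- plus_INR. apply Hx. Qed.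

Lemma not_nonpos_int_succ x : not_nonpos_int x -> not_nonpos_int (x + 1).
Proof. exact (not_nonpos_int_add_nat x 1). Qed.

Lemma not_nonpos_int_of_noninteger x : (forall z, x <> IZR z) -> not_nonpos_int x.
Proof.
  intros Hx k Hk. apply (Hx (- Z.of_nat k)%Z).
  rewrite opp_IZR, <- INR_IZR_INZ. lra.
Qed.

Lemma noninteger_succ x : (forall z, x <> IZR z) -> forall z, x + 1 <> IZR z.
Proof. intros Hx z Hz. apply (Hx (z - 1)%Z). rewrite minus_IZR. lra. Qed.

Lemma is_derive_Rpower c t : 0 < t -> is_derive (fun y => Rpower y c) t (c * Rpower t (c - 1)).
Proof. intros Ht. apply is_derive_Reals, derivable_pt_lim_power, Ht. Qed.

Lemma ex_derive_Rpower c t : 0 < t -> ex_derive (fun y => Rpower y c) t.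
Proof. intros Ht. eexists. apply is_derive_Rpower, Ht. Qed.

Lemma Derive_Rpower c t : 0 < t -> Derive (fun y => Rpower y c) t = c * Rpower t (c - 1).
Proof. intros Ht. apply is_derive_unique, is_derive_Rpower, Ht. Qed.

Lemma is_derive_0_constant (f : R -> R) c d : (forall x, c < x < d -> is_derive f x 0) ->
  forall x y, c < x < d -> c < y < d -> f x = f y.
Proof.
  intros Hf x y Hx Hy.
  assert (Hxy : forall t, Rmin x y <= t <= Rmax x y -> c < t < d).
  { intros t. apply Rmin_case_strong; apply Rmax_case_strong; intros; lra. }
  destruct (MVT_gen f x y (fun _ => 0)) as [t [_ Ht]].
  - intros t Ht. apply Hf, Hxy. lra.
  - intros t Ht. apply continuity_pt_filterlim.
    apply (ex_derive_continuous (K := R_AbsRing) (V := R_NormedModule)).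
    eexists. apply Hf, Hxy, Ht.
  - lra.
Qed.

(* [rho_poly a b] is the polynomial [q] with [rho(x; a, b) = (1 + x)^(b+1) q(x)]; the
   recursion in [a] is integration by parts against [(1 + x)^b dx = d (1 + x)^(b+1) / (b+1)]. *)
Fixpoint rho_poly (a : nat) (b x : R) : R :=
  match a with
  | O => / (b + 1)
  | S a' => (1 - x) ^ a / (b + 1) + INR a / (b + 1) * (1 + x) * rho_poly a' (b + 1) x
  end.

Lemma rho_poly_is_poly a b : is_poly (rho_poly a b).
Proof.
  revert b; induction a as [|a IH]; intros b; simpl.
  - apply is_poly_const.
  - repeat first [ apply IH | apply is_poly_minus | apply is_poly_plus | apply is_poly_mult
                 | apply is_poly_pow | apply is_poly_id | apply is_poly_const ].
Qed.

Lemma is_derive_rho_poly a b x : not_nonpos_int (b + 1) -> -1 < x ->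
  is_derive (fun y => Rpower (1 + y) (b + 1) * rho_poly a b y) x ((1 - x) ^ a * Rpower (1 + x) b).
Proof.
  revert b; induction a as [|a IH]; intros b Hb Hx; pose proof (not_nonpos_int_neq0 _ Hb) as Hb0.
  - simpl. auto_derive; [apply ex_derive_Rpower; lra |].
    rewrite Derive_Rpower by lra. replace (b + 1 - 1) with b by ring. field. exact Hb0.
  - pose proof (IH (b + 1) (not_nonpos_int_succ _ Hb) Hx) as HG.
    pose (G y := Rpower (1 + y) (b + 1 + 1) * rho_poly a (b + 1) y).
    assert (Hloc : locally x (fun y =>
      (1 - y) ^ S a / (b + 1) * Rpower (1 + y) (b + 1) + (INR a + 1) / (b + 1) * G y
      = Rpower (1 + y) (b + 1) * rho_poly (S a) b y)).
    { apply (filter_imp (fun y => -1 < y)); [| exact (open_gt (-1) x Hx)].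
      intros y Hy. unfold G. rewrite (Rpower_plus (b + 1) 1), Rpower_1 by lra.
      change (rho_poly (S a) b y) with
        ((1 - y) ^ S a / (b + 1) + INR (S a) / (b + 1) * (1 + y) * rho_poly a (b + 1) y).
      rewrite S_INR. ring. }
    apply (is_derive_ext_loc _ _ _ _ Hloc).
    auto_derive; [split; [apply ex_derive_Rpower; lra | split; [eexists; exact HG | exact I]] |].
    rewrite Derive_Rpower by lra.
    replace (Derive (fun y => G y) x) with ((1 - x) ^ a * Rpower (1 + x) (b + 1))
      by (symmetry; exact (is_derive_unique _ x _ HG)).
    replace (b + 1 - 1) with b by ring.
    rewrite (Rpower_plus b 1), Rpower_1 by lra.
    change (match a with 0%nat => 1 | S _ => INR a + 1 end) with (INR (S a)).
    rewrite S_INR, <- tech_pow_Rmult. replace (1 + - x) with (1 - x) by ring.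
    field. exact Hb0.
Qed.

(** * The Gamma integral *)

Lemma lub_approx (E : R -> Prop) B x0 : E x0 -> (forall x, E x -> x <= B) ->
  exists L, (forall x, E x -> x <= L) /\ (forall eps, 0 < eps -> exists x, E x /\ L - eps < x).
Proof.
  intros HE HB.
  destruct (completeness E) as [L [HL1 HL2]]; [exists B; exact HB | exists x0; exact HE |].
  exists L. split; [exact HL1 |].
  intros eps Heps. apply NNPP. intros Hno.
  enough (L <= L - eps) by lra.
  apply HL2. intros x Hx. apply Rnot_lt_le. intros Hlt. apply Hno. exists x. split; assumption.
Qed.

Lemma filterlim_at_right_nonincreasing (G : R -> R) c d B : c < d ->
  (forall u v, c < u <= v -> v <= d -> G v <= G u) -> (forall u, c < u <= d -> G u <= B) ->
  exists L, (forall u, c < u <= d -> G u <= L) /\ filterlim G (at_right c) (locally L).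
Proof.
  intros Hcd Hmon HB.
  destruct (lub_approx (fun y => exists u, c < u <= d /\ y = G u) B (G d)) as [L [HL1 HL2]].
  - exists d. split; [lra | reflexivity].
  - intros y [u [Hu ->]]. apply HB, Hu.
  - exists L. split.
    + intros u Hu. apply HL1. exists u. split; [exact Hu | reflexivity].
    + apply filterlim_locally. intros eps.
      destruct (HL2 eps (cond_pos eps)) as [y [[u0 [Hu0 ->]] Hy]].
      apply (at_right_of_interval c (u0 - c)); [lra |]. intros u Hu.
      apply R_ball, Rabs_lt_between.
      assert (G u0 <= G u) by (apply Hmon; lra).
      assert (G u <= L) by (apply HL1; exists u; split; [lra | reflexivity]).
      lra.
Qed.

Lemma filterlim_p_infty_nondecreasing (G : R -> R) c B :
  (forall u v, c <= u <= v -> G u <= G v) -> (forall v, c <= v -> G v <= B) ->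
  exists L, (forall v, c <= v -> G v <= L) /\ filterlim G (Rbar_locally p_infty) (locally L).
Proof.
  intros Hmon HB.
  destruct (lub_approx (fun y => exists v, c <= v /\ y = G v) B (G c)) as [L [HL1 HL2]].
  - exists c. split; [lra | reflexivity].
  - intros y [v [Hv ->]]. apply HB, Hv.
  - exists L. split.
    + intros v Hv. apply HL1. exists v. split; [exact Hv | reflexivity].
    + apply filterlim_locally. intros eps.
      destruct (HL2 eps (cond_pos eps)) as [y [[v0 [Hv0 ->]] Hy]].
      exists v0. intros v Hv.
      apply R_ball, Rabs_lt_between.
      assert (G v0 <= G v) by (apply Hmon; lra).
      assert (G v <= L) by (apply HL1; exists v; split; [lra | reflexivity]).
      lra.
Qed.

Lemma ex_RInt_continuous_on (f : R -> R) (P : R -> Prop) u v :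
  (forall t, P t -> continuous f t) -> (forall t, Rmin u v <= t <= Rmax u v -> P t) ->
  ex_RInt f u v.
Proof.
  intros Hf HP. apply (ex_RInt_continuous (V := R_CompleteNormedModule)).
  intros t Ht. apply Hf, HP, Ht.
Qed.

Lemma is_RInt_gen_at_right_nonneg (f : R -> R) c d B : c < d ->
  (forall t, c < t -> continuous f t) -> (forall t, c < t -> 0 <= f t) ->
  (forall u, c < u <= d -> RInt f u d <= B) ->
  exists L, (forall u, c < u <= d -> RInt f u d <= L) /\ is_RInt_gen f (at_right c) (at_point d) L.
Proof.
  intros Hcd Hf Hpos HB.
  assert (Hex : forall u v, c < u -> c < v -> ex_RInt f u v).
  { intros u v Hu Hv. apply (ex_RInt_continuous_on f (fun t => c < t)); [exact Hf |].
    intros t Ht. apply Rlt_le_trans with (Rmin u v); [apply Rmin_glb_lt; assumption | apply Ht]. }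
  destruct (filterlim_at_right_nonincreasing (fun u => RInt f u d) c d B) as [L [HL Hlim]];
    [exact Hcd | | exact HB |].
  - intros u v Huv Hvd.
    rewrite <- (RInt_Chasles f u v d) by (apply Hex; lra).
    assert (0 <= RInt f u v) by (apply RInt_ge_0; [lra | apply Hex; lra | intros; apply Hpos; lra]).
    change (RInt f v d <= RInt f u v + RInt f v d). lra.
  - exists L. split; [exact HL |].
    apply filterlimi_lim_ext_loc with (f := fun ab => RInt f (fst ab) (snd ab)).
    + apply Filter_prod with (Q := fun u => c < u) (R := fun v => v = d).
      * apply at_right_gt.
      * reflexivity.
      * intros u v Hu ->. simpl. apply (RInt_correct (V := R_CompleteNormedModule)), Hex; lra.
    + intros P [eps HP].
      destruct (proj1 (filterlim_locally _ L) Hlim eps) as [delta Hdelta].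
      apply Filter_prod with (Q := fun u => ball c delta u /\ c < u) (R := fun v => v = d).
      * exists delta. intros u Hu Hcu. split; assumption.
      * reflexivity.
      * intros u v [Hu Hcu] ->. apply HP, Hdelta; assumption.
Qed.

Lemma is_RInt_gen_p_infty_nonneg (f : R -> R) c B :
  (forall t, c <= t -> continuous f t) -> (forall t, c <= t -> 0 <= f t) ->
  (forall v, c <= v -> RInt f c v <= B) ->
  exists L, 0 <= L /\ is_RInt_gen f (at_point c) (Rbar_locally p_infty) L.
Proof.
  intros Hf Hpos HB.
  assert (Hex : forall u v, c <= u -> c <= v -> ex_RInt f u v).
  { intros u v Hu Hv. apply (ex_RInt_continuous_on f (fun t => c <= t)); [exact Hf |].
    intros t Ht. apply Rle_trans with (Rmin u v); [apply Rmin_glb; assumption | apply Ht]. }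
  destruct (filterlim_p_infty_nondecreasing (fun v => RInt f c v) c B) as [L [HL Hlim]];
    [| exact HB |].
  - intros u v Huv.
    rewrite <- (RInt_Chasles f c u v) by (apply Hex; lra).
    assert (0 <= RInt f u v) by (apply RInt_ge_0; [lra | apply Hex; lra | intros; apply Hpos; lra]).
    change (RInt f c u <= RInt f c u + RInt f u v). lra.
  - exists L. split.
    + pose proof (HL c (Rle_refl c)) as H0. rewrite RInt_point in H0. exact H0.
    + apply filterlimi_lim_ext_loc with (f := fun ab => RInt f (fst ab) (snd ab)).
      * apply Filter_prod with (Q := fun u => u = c) (R := fun v => c < v).
        -- reflexivity.
        -- exists c. tauto.
        -- intros u v -> Hv. simpl. apply (RInt_correct (V := R_CompleteNormedModule)), Hex; lra.
      * intros P [eps HP].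
        destruct (proj1 (filterlim_locally _ L) Hlim eps) as [M HM].
        apply Filter_prod with (Q := fun u => u = c) (R := fun v => M < v).
        -- reflexivity.
        -- exists M. tauto.
        -- intros u v -> Hv. apply HP, HM, Hv.
Qed.

Lemma exp_le_compat x y : x <= y -> exp x <= exp y.
Proof. intros [Hlt | ->]; [left; apply exp_increasing, Hlt | apply Rle_refl]. Qed.

Definition gamma_integrand (s t : R) : R := Rpower t (s - 1) * exp (- t).

Lemma gamma_integrand_1 t : gamma_integrand 1 t = exp (- t).
Proof. unfold gamma_integrand, Rpower. rewrite Rminus_diag, Rmult_0_l, exp_0. ring. Qed.

Lemma gamma_integrand_gt0 s t : 0 < gamma_integrand s t.
Proof. apply Rmult_lt_0_compat; [apply Rpower_gt0 | apply exp_pos]. Qed.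

Lemma continuous_gamma_integrand s t : 0 < t -> continuous (gamma_integrand s) t.
Proof.
  intros Ht. apply (ex_derive_continuous (K := R_AbsRing) (V := R_NormedModule) (gamma_integrand s) t).
  unfold gamma_integrand. auto_derive. apply ex_derive_Rpower, Ht.
Qed.

Lemma gamma_integrand_le_Rpower s t : 0 <= t -> gamma_integrand s t <= Rpower t (s - 1).
Proof.
  intros Ht. unfold gamma_integrand. rewrite <- (Rmult_1_r (Rpower t (s - 1))) at 2.
  apply Rmult_le_compat_l; [left; apply Rpower_gt0 |].
  rewrite <- exp_0. apply exp_le_compat. lra.
Qed.

Lemma gamma_integrand_le_exp_half s t :
  1 <= t -> gamma_integrand s t <= exp (2 * (s - 1) ^ 2) * exp (- t / 2).
Proof.
  intros Ht. unfold gamma_integrand, Rpower. rewrite <- !exp_plus. apply exp_le_compat.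
  (* [ln t <= 2 sqrt t] and [2 |s - 1| sqrt t <= t / 2 + 2 (s - 1)^2] *)
  assert (Hsq : 0 < sqrt t) by (apply sqrt_lt_R0; lra).
  assert (Hln : ln t <= 2 * sqrt t).
  { rewrite <- (sqrt_sqrt t) at 1 by lra. rewrite ln_mult by assumption.
    pose proof (exp_ineq1_le (ln (sqrt t))) as H. rewrite exp_ln in H by assumption. lra. }
  assert (Hln0 : 0 <= ln t) by (rewrite <- ln_1; apply ln_le; lra).
  assert (Habs : (s - 1) * ln t <= Rabs (s - 1) * (2 * sqrt t)).
  { apply Rle_trans with (Rabs (s - 1) * ln t).
    - apply Rmult_le_compat_r; [exact Hln0 | apply RRle_abs].
    - apply Rmult_le_compat_l; [apply Rabs_pos | exact Hln]. }
  assert (Hsq2 : Rabs (s - 1) ^ 2 = (s - 1) ^ 2) by apply pow2_abs.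
  pose proof (pow2_ge_0 (sqrt t - 2 * Rabs (s - 1))).
  pose proof (sqrt_sqrt t ltac:(lra)).
  nra.
Qed.

Lemma is_RInt_Rpower s u : 0 < s -> 0 < u ->
  is_RInt (fun t => Rpower t (s - 1)) u 1 (/ s - Rpower u s / s).
Proof.
  intros Hs Hu.
  assert (Hin : forall t, Rmin u 1 <= t <= Rmax u 1 -> 0 < t).
  { intros t Ht. apply Rlt_le_trans with (Rmin u 1); [apply Rmin_glb_lt; lra | apply Ht]. }
  replace (/ s - Rpower u s / s) with (Rpower 1 s / s - Rpower u s / s)
    by (unfold Rpower; rewrite ln_1, Rmult_0_r, exp_0; field; lra).
  apply (is_RInt_derive (fun t => Rpower t s / s)).
  - intros t Ht. specialize (Hin t Ht).
    auto_derive; [apply ex_derive_Rpower, Hin |].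
    rewrite Derive_Rpower by exact Hin. field. lra.
  - intros t Ht. apply (ex_derive_continuous (K := R_AbsRing) (V := R_NormedModule)).
    apply ex_derive_Rpower, Hin, Ht.
Qed.

Lemma is_RInt_exp_half K v :
  is_RInt (fun t => K * exp (- t / 2)) 1 v (2 * K * exp (- 1 / 2) - 2 * K * exp (- v / 2)).
Proof.
  replace (2 * K * exp (- 1 / 2) - 2 * K * exp (- v / 2))
    with (- 2 * K * exp (- v / 2) - - 2 * K * exp (- 1 / 2)) by ring.
  apply (is_RInt_derive (fun t => - 2 * K * exp (- t / 2))).
  - intros t _. auto_derive; [exact I |].
    change (- t * / 2) with (- t / 2). field.
  - intros t _. apply (ex_derive_continuous (K := R_AbsRing) (V := R_NormedModule)).
    auto_derive. exact I.
Qed.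

Lemma ex_RInt_gamma_integrand s u v : 0 < u -> 0 < v -> ex_RInt (gamma_integrand s) u v.
Proof.
  intros Hu Hv. apply (ex_RInt_continuous_on _ (fun t => 0 < t)).
  - intros t Ht. apply continuous_gamma_integrand, Ht.
  - intros t Ht. apply Rlt_le_trans with (Rmin u v); [apply Rmin_glb_lt; assumption | apply Ht].
Qed.

Lemma RInt_gamma_integrand_le_near0 s u : 0 < s -> 0 < u <= 1 ->
  RInt (gamma_integrand s) u 1 <= / s.
Proof.
  intros Hs Hu.
  apply Rle_trans with (RInt (fun t => Rpower t (s - 1)) u 1).
  - apply RInt_le; [lra | apply ex_RInt_gamma_integrand; lra | eexists; apply is_RInt_Rpower; lra |].
    intros t Ht. apply gamma_integrand_le_Rpower. lra.
  - rewrite (is_RInt_unique _ _ _ _ (is_RInt_Rpower s u Hs ltac:(lra))).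
    pose proof (Rpower_gt0 u s). pose proof (Rinv_0_lt_compat s Hs).
    unfold Rdiv. nra.
Qed.

Lemma RInt_gamma_integrand_le_near_p_infty s v : 1 <= v ->
  RInt (gamma_integrand s) 1 v <= 2 * exp (2 * (s - 1) ^ 2) * exp (- 1 / 2).
Proof.
  intros Hv. set (K := exp (2 * (s - 1) ^ 2)).
  apply Rle_trans with (RInt (fun t => K * exp (- t / 2)) 1 v).
  - apply RInt_le; [lra | apply ex_RInt_gamma_integrand; lra | eexists; apply is_RInt_exp_half |].
    intros t Ht. apply gamma_integrand_le_exp_half. lra.
  - rewrite (is_RInt_unique _ _ _ _ (is_RInt_exp_half K v)).
    assert (0 < K) by apply exp_pos. pose proof (exp_pos (- v / 2)). nra.
Qed.

Lemma is_RInt_gen_gamma_integrand s : 0 < s ->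
  exists L, 0 < L /\ is_RInt_gen (gamma_integrand s) (at_right 0) (Rbar_locally p_infty) L.
Proof.
  intros Hs.
  destruct (is_RInt_gen_at_right_nonneg (gamma_integrand s) 0 1 (/ s)) as [L1 [HL1 H1]].
  - lra.
  - intros t Ht. apply continuous_gamma_integrand, Ht.
  - intros t _. left. apply gamma_integrand_gt0.
  - intros u Hu. apply RInt_gamma_integrand_le_near0; assumption.
  - destruct (is_RInt_gen_p_infty_nonneg (gamma_integrand s) 1
                (2 * exp (2 * (s - 1) ^ 2) * exp (- 1 / 2))) as [L2 [HL2 H2]].
    + intros t Ht. apply continuous_gamma_integrand. lra.
    + intros t _. left. apply gamma_integrand_gt0.
    + apply RInt_gamma_integrand_le_near_p_infty.
    + exists (plus L1 L2). split; [| exact (is_RInt_gen_Chasles _ 1 L1 L2 H1 H2)].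
      assert (0 < RInt (gamma_integrand s) (1 / 2) 1).
      { apply RInt_gt_0; [lra | intros; apply gamma_integrand_gt0 |].
        intros t Ht. apply continuous_gamma_integrand. lra. }
      assert (RInt (gamma_integrand s) (1 / 2) 1 <= L1) by (apply HL1; lra).
      change (0 < L1 + L2). lra.
Qed.

Lemma Gamma_pos_eq s L :
  is_RInt_gen (gamma_integrand s) (at_right 0) (Rbar_locally p_infty) L -> Gamma_pos s = L.
Proof. apply (is_RInt_gen_unique (V := R_CompleteNormedModule)). Qed.

Lemma Gamma_pos_gt0 s : 0 < s -> 0 < Gamma_pos s.
Proof.
  intros Hs. destruct (is_RInt_gen_gamma_integrand s Hs) as [L [HL H]].
  rewrite (Gamma_pos_eq s L H). exact HL.
Qed.

Lemma filterlim_p_infty_0_of_exp_bound (h : R -> R) K :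
  (forall t, 1 <= t -> Rabs (h t) <= K * exp (- t / 2)) ->
  filterlim h (Rbar_locally p_infty) (locally 0).
Proof.
  intros Hh. apply filterlim_locally. intros eps.
  set (K' := Rabs K + 1).
  assert (HK' : 0 < K') by (pose proof (Rabs_pos K); unfold K'; lra).
  assert (HeK : 0 < eps / K') by (apply Rdiv_lt_0_compat; [apply cond_pos | exact HK']).
  exists (Rmax 1 (- 2 * ln (eps / K'))). intros t Ht.
  apply R_ball. rewrite Rminus_0_r.
  pose proof (Rmax_l 1 (- 2 * ln (eps / K'))). pose proof (Rmax_r 1 (- 2 * ln (eps / K'))).
  assert (Hexp : exp (- t / 2) < eps / K').
  { rewrite <- (exp_ln (eps / K')) by exact HeK. apply exp_increasing. lra. }
  apply Rle_lt_trans with (K' * exp (- t / 2)).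
  - apply Rle_trans with (K * exp (- t / 2)); [apply Hh; lra |].
    apply Rmult_le_compat_r; [left; apply exp_pos |].
    pose proof (RRle_abs K). unfold K'. lra.
  - replace (pos eps) with (K' * (eps / K')) by (field; lra).
    apply Rmult_lt_compat_l; assumption.
Qed.

Lemma is_RInt_gen_derive_pos (h dh : R -> R) la lb :
  (forall t, 0 < t -> is_derive h t (dh t)) -> (forall t, 0 < t -> continuous dh t) ->
  filterlim h (at_right 0) (locally la) -> filterlim h (Rbar_locally p_infty) (locally lb) ->
  is_RInt_gen dh (at_right 0) (Rbar_locally p_infty) (lb - la).
Proof.
  intros Hd Hc Ha Hb.
  assert (Hpos : forall P : R -> Prop, (forall t, 0 < t -> P t) ->
    filter_prod (at_right 0) (Rbar_locally p_infty)
      (fun ab => forall t, Rmin (fst ab) (snd ab) <= t <= Rmax (fst ab) (snd ab) -> P t)).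
  { intros P HP. apply Filter_prod with (Q := fun a => 0 < a) (R := fun b => 0 < b).
    - apply at_right_gt.
    - exists 0. tauto.
    - intros a b Ha0 Hb0 t Ht. apply HP.
      apply Rlt_le_trans with (Rmin a b); [apply Rmin_glb_lt; assumption | apply Ht]. }
  apply (is_RInt_gen_ext (Derive h)).
  - generalize (Hpos (fun t => Derive h t = dh t) (fun t Ht => is_derive_unique _ _ _ (Hd t Ht))).
    apply filter_imp. intros ab Hab t Ht. apply Hab. lra.
  - apply is_RInt_gen_Derive; [| | exact Ha | exact Hb].
    + apply Hpos. intros t Ht. eexists. apply Hd, Ht.
    + generalize (Hpos _ (fun t Ht => conj Ht (Hc t Ht))). apply filter_imp.
      intros ab Hab t Ht. destruct (Hab t Ht) as [Ht0 Hct].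
      apply (continuous_ext_loc _ dh); [| exact Hct].
      apply (filter_imp (fun y => 0 < y)); [| exact (open_gt 0 t Ht0)].
      intros y Hy. symmetry. apply is_derive_unique, Hd, Hy.
Qed.

Lemma Gamma_pos_1 : Gamma_pos 1 = 1.
Proof.
  apply Gamma_pos_eq.
  assert (H := is_RInt_gen_derive_pos (fun t => - exp (- t)) (gamma_integrand 1) (-1) 0).
  replace (0 - -1) with 1 in H by ring. apply H.
  - intros t _. rewrite gamma_integrand_1. auto_derive; [exact I | ring].
  - intros t Ht. apply continuous_gamma_integrand, Ht.
  - assert (E : - exp (- 0) = -1) by (replace (- 0) with 0 by ring; rewrite exp_0; ring).
    rewrite <- E. apply (continuous_at_right (fun t => - exp (- t)) 0).
    apply (ex_derive_continuous (K := R_AbsRing) (V := R_NormedModule)).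
    auto_derive. exact I.
  - apply (filterlim_p_infty_0_of_exp_bound _ 1). intros t Ht.
    rewrite Rabs_Ropp, Rabs_pos_eq, Rmult_1_l by (left; apply exp_pos).
    apply exp_le_compat. lra.
Qed.

Lemma Gamma_pos_succ s : 0 < s -> Gamma_pos (s + 1) = s * Gamma_pos s.
Proof.
  intros Hs.
  destruct (is_RInt_gen_gamma_integrand s Hs) as [L [_ HL]].
  rewrite (Gamma_pos_eq s L HL). apply Gamma_pos_eq.
  (* integration by parts: [t^s e^(-t)] vanishes at both ends *)
  assert (HD : is_RInt_gen (fun t => gamma_integrand (s + 1) t - s * gamma_integrand s t)
                 (at_right 0) (Rbar_locally p_infty) (0 - 0)).
  { apply (is_RInt_gen_derive_pos (fun t => Rpower t s * - exp (- t))).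
    - intros t Ht. auto_derive; [apply ex_derive_Rpower, Ht |].
      rewrite Derive_Rpower by exact Ht. unfold gamma_integrand.
      replace (s + 1 - 1) with s by ring. ring.
    - intros t Ht. apply (ex_derive_continuous (K := R_AbsRing) (V := R_NormedModule)).
      unfold gamma_integrand. auto_derive.
      split; [| split; [| exact I]]; apply ex_derive_Rpower, Ht.
    - assert (Hexp : continuous (fun t => - exp (- t)) 0).
      { apply (ex_derive_continuous (K := R_AbsRing) (V := R_NormedModule)). auto_derive. exact I. }
      pose proof (filterlim_Rmult _ _ _ _ (filterlim_Rpower_at_right 0 s Hs)
                    (continuous_at_right _ _ Hexp)) as H0.
      rewrite Rmult_0_l in H0. eapply filterlim_ext; [| exact H0].
      intros t. cbv beta. rewrite Rminus_0_r. reflexivity.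
    - apply (filterlim_p_infty_0_of_exp_bound _ (exp (2 * (s + 1 - 1) ^ 2))). intros t Ht.
      rewrite Rabs_mult, Rabs_Ropp, !Rabs_pos_eq by (left; first [apply exp_pos | apply Rpower_gt0]).
      replace s with (s + 1 - 1) at 1 by ring. apply gamma_integrand_le_exp_half, Ht. }
  replace (s * L) with (s * L + (0 - 0)) by ring.
  apply (is_RInt_gen_ext (fun t => s * gamma_integrand s t
                                   + (gamma_integrand (s + 1) t - s * gamma_integrand s t))).
  - apply filter_forall. intros ab t _. apply Rplus_minus.
  - exact (is_RInt_gen_plus _ _ _ _ (is_RInt_gen_scal _ s _ HL) HD).
Qed.

(** * The Gamma function and [nu] *)

Definition pochhammer (x : R) (m : nat) : R :=
  fold_right Rmult 1 (map (fun k => x + INR k) (seq 0 m)).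

Lemma Gamma_unfold x :
  Gamma x = Gamma_pos (x + INR (Z.to_nat (up (Rabs x)))) / pochhammer x (Z.to_nat (up (Rabs x))).
Proof. reflexivity. Qed.

Lemma shift_up_Rabs_pos x : 0 < x + INR (Z.to_nat (up (Rabs x))).
Proof.
  pose proof (Rabs_lt_INR_up x). pose proof (Rle_abs (- x)). rewrite Rabs_Ropp in *. lra.
Qed.

Lemma fold_right_Rmult_init c l : fold_right Rmult c l = fold_right Rmult 1 l * c.
Proof. induction l as [|a l IH]; simpl; [| rewrite IH]; ring. Qed.

Lemma pochhammer_S x m : pochhammer x (S m) = pochhammer x m * (x + INR m).
Proof.
  unfold pochhammer. rewrite seq_S, map_app, fold_right_app. simpl.
  rewrite fold_right_Rmult_init. ring.
Qed.

Lemma pochhammer_S_l x m : pochhammer x (S m) = x * pochhammer (x + 1) m.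
Proof.
  induction m as [|m IH]; [unfold pochhammer; simpl; ring |].
  rewrite pochhammer_S, IH, pochhammer_S, S_INR. ring.
Qed.

Lemma pochhammer_neq0 x m : not_nonpos_int x -> pochhammer x m <> 0.
Proof.
  intros Hx; induction m as [|m IH]; [unfold pochhammer; simpl; lra |].
  rewrite pochhammer_S. apply Rmult_integral_contrapositive. split; [exact IH | apply Hx].
Qed.

Lemma Gamma_pos_div_pochhammer_S x m : 0 < x + INR m ->
  Gamma_pos (x + INR (S m)) / pochhammer x (S m) = Gamma_pos (x + INR m) / pochhammer x m.
Proof.
  intros Hm. rewrite pochhammer_S, S_INR, <- Rplus_assoc, Gamma_pos_succ by exact Hm.
  unfold Rdiv. rewrite Rinv_mult.
  transitivity (Gamma_pos (x + INR m) * / pochhammer x m * ((x + INR m) * / (x + INR m)));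
    [ring |].
  rewrite Rinv_r by lra. ring.
Qed.

Lemma Gamma_shift x m : 0 < x + INR m -> Gamma x = Gamma_pos (x + INR m) / pochhammer x m.
Proof.
  intros Hm.
  assert (Hstable : forall n j, 0 < x + INR n ->
    Gamma_pos (x + INR (n + j)) / pochhammer x (n + j) = Gamma_pos (x + INR n) / pochhammer x n).
  { intros n j Hn. induction j as [|j IH]; [rewrite Nat.add_0_r; reflexivity |].
    rewrite Nat.add_succ_r, Gamma_pos_div_pochhammer_S; [exact IH |].
    rewrite plus_INR. pose proof (pos_INR j). lra. }
  rewrite Gamma_unfold. set (n := Z.to_nat (up (Rabs x))).
  rewrite <- (Hstable n (m - n)%nat (shift_up_Rabs_pos x)), <- (Hstable m (n - m)%nat Hm).
  replace (n + (m - n))%nat with (m + (n - m))%nat by lia. reflexivity.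
Qed.

Lemma Gamma_succ x : x <> 0 -> Gamma (x + 1) = x * Gamma x.
Proof.
  intros Hx. pose proof (shift_up_Rabs_pos x) as Hm. set (m := Z.to_nat (up (Rabs x))) in Hm.
  rewrite (Gamma_shift (x + 1) m), (Gamma_shift x (S m)) by (rewrite ?S_INR; lra).
  rewrite pochhammer_S_l, S_INR. replace (x + (INR m + 1)) with (x + 1 + INR m) by ring.
  unfold Rdiv. rewrite Rinv_mult.
  transitivity (Gamma_pos (x + 1 + INR m) * / pochhammer (x + 1) m * (x * / x));
    [rewrite Rinv_r by exact Hx |]; ring.
Qed.

Lemma Gamma_neq0 x : not_nonpos_int x -> Gamma x <> 0.
Proof.
  intros Hx. rewrite (Gamma_shift x _ (shift_up_Rabs_pos x)).
  apply Rmult_integral_contrapositive. split.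
  - apply Rgt_not_eq, Gamma_pos_gt0, shift_up_Rabs_pos.
  - apply Rinv_neq_0_compat, pochhammer_neq0, Hx.
Qed.

Lemma Gamma_1 : Gamma 1 = 1.
Proof.
  rewrite (Gamma_shift 1 0) by (simpl; lra).
  unfold pochhammer. simpl. rewrite Rplus_0_r, Gamma_pos_1. field.
Qed.

Lemma nu_0 b : not_nonpos_int (b + 1) -> nu 0 b = Rpower 2 (b + 1) / (b + 1).
Proof.
  intros Hb. unfold nu. change (INR 0) with 0.
  replace (0 + b + 2) with (b + 1 + 1) by ring. replace (1 + 0 + b) with (b + 1) by ring.
  rewrite Rplus_0_l, Gamma_1, (Gamma_succ (b + 1)) by exact (not_nonpos_int_neq0 _ Hb).
  pose proof (not_nonpos_int_neq0 _ Hb). pose proof (Gamma_neq0 _ Hb). field. tauto.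
Qed.

Lemma nu_S a b : not_nonpos_int (b + 1) -> nu (S a) b = INR (S a) / (b + 1) * nu a (b + 1).
Proof.
  intros Hb. unfold nu. rewrite S_INR.
  rewrite (Gamma_succ (INR a + 1)) by (pose proof (pos_INR a); lra).
  rewrite (Gamma_succ (b + 1)) by exact (not_nonpos_int_neq0 _ Hb).
  replace (1 + (INR a + 1) + b) with (1 + INR a + (b + 1)) by ring.
  replace (INR a + 1 + b + 2) with (b + 1 + INR (a + 2)) by (rewrite plus_INR; simpl; ring).
  replace (INR a + (b + 1) + 2) with (b + 1 + INR (a + 2)) by (rewrite plus_INR; simpl; ring).
  pose proof (not_nonpos_int_neq0 _ Hb).
  pose proof (Gamma_neq0 _ (not_nonpos_int_add_nat _ (a + 2) Hb)). field. tauto.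
Qed.

Lemma rho_poly_at_1 a b : not_nonpos_int (b + 1) -> Rpower 2 (b + 1) * rho_poly a b 1 = nu a b.
Proof.
  revert b; induction a as [|a IH]; intros b Hb.
  - rewrite nu_0 by exact Hb. reflexivity.
  - rewrite nu_S, <- IH by first [exact Hb | apply not_nonpos_int_succ, Hb].
    change (rho_poly (S a) b 1)
      with ((1 - 1) ^ S a / (b + 1) + INR (S a) / (b + 1) * (1 + 1) * rho_poly a (b + 1) 1).
    rewrite (Rpower_plus (b + 1) 1), Rpower_1 by lra.
    rewrite Rminus_diag, pow_ne_zero by discriminate. unfold Rdiv. ring.
Qed.

(** * Uniqueness of the antiderivative *)

Lemma locally_neq0_of_continuous (f : R -> R) x :
  continuous f x -> f x <> 0 -> locally x (fun y => f y <> 0).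
Proof.
  intros Hc Hx. apply (Hc (fun z => z <> 0)).
  exists (mkposreal _ (Rabs_pos_lt _ Hx)). intros z Hz ->.
  change (Rabs (0 - f x) < Rabs (f x)) in Hz. rewrite Rminus_0_l, Rabs_Ropp in Hz. lra.
Qed.

Lemma antideriv_rep_rho_poly a b p : not_nonpos_int (b + 1) ->
  (forall x, rho_poly a b x = peval p x) -> antideriv_rep a b p (1 :: nil).
Proof.
  intros Hb Hp. split; [simpl; lra |]. split; [simpl; lra |].
  intros x Hx _. apply (is_derive_ext (fun y => Rpower (1 + y) (b + 1) * rho_poly a b y)).
  - intros y. unfold rho_of. rewrite Hp. simpl. field.
  - apply is_derive_rho_poly; [exact Hb | lra].
Qed.

Lemma antideriv_rep_sub_rho_constant a b P Q : not_nonpos_int (b + 1) -> antideriv_rep a b P Q ->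
  exists d C, 0 < d /\ forall x, -1 < x < -1 + d ->
    peval Q x <> 0 /\ rho_of P Q b x - Rpower (1 + x) (b + 1) * rho_poly a b x = C.
Proof.
  intros Hb [_ [HQ HD]].
  destruct (locally_neq0_of_continuous _ _ (continuous_peval Q (-1)) HQ) as [e He].
  set (d := Rmin e 2).
  assert (Hd : 0 < d) by (apply Rmin_glb_lt; [apply cond_pos | lra]).
  assert (Hde : d <= e) by apply Rmin_l.
  assert (Hd2 : d <= 2) by apply Rmin_r.
  assert (HQd : forall x, -1 < x < -1 + d -> peval Q x <> 0).
  { intros x Hx. apply He. change (Rabs (x - -1) < e). rewrite Rabs_pos_eq; lra. }
  set (D x := rho_of P Q b x - Rpower (1 + x) (b + 1) * rho_poly a b x).
  exists d, (D (-1 + d / 2)). split; [exact Hd |]. intros x Hx. split; [apply HQd, Hx |].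
  apply (is_derive_0_constant D (-1) (-1 + d)); [| exact Hx | lra].
  intros y Hy.
  assert (H := is_derive_minus _ _ y _ _ (HD y ltac:(lra) (HQd y Hy))
                 (is_derive_rho_poly a b y Hb ltac:(lra))).
  rewrite minus_eq_zero in H. exact H.
Qed.

Lemma antideriv_rep_eq_rho_poly a b P Q : (forall z, b <> IZR z) -> antideriv_rep a b P Q ->
  forall x, peval P x = rho_poly a b x * peval Q x.
Proof.
  intros hb HPQ.
  pose proof (not_nonpos_int_of_noninteger _ (noninteger_succ _ hb)) as Hb.
  destruct (antideriv_rep_sub_rho_constant a b P Q Hb HPQ) as [d [C [Hd HC]]].
  destruct (is_poly_minus (peval P) (fun x => rho_poly a b x * peval Q x)) as [N HN].
  { exists P. reflexivity. }
  { apply is_poly_mult; [apply rho_poly_is_poly | exists Q; reflexivity]. }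
  assert (HNC : forall x, -1 < x < -1 + d -> peval N x = C * Rpower (1 + x) (- (b + 1)) * peval Q x).
  { intros x Hx. destruct (HC x Hx) as [HQx <-]. rewrite <- HN. unfold rho_of.
    transitivity ((peval P x / peval Q x - rho_poly a b x) * peval Q x
                  * (Rpower (1 + x) (- (b + 1)) * Rpower (1 + x) (b + 1))); [| ring].
    rewrite Rpower_opp_mul. field. exact HQx. }
  assert (HC0 : C = 0).
  { apply (poly_eq_Rpower_coef0 N Q C (- (b + 1))).
    - intros z Hz. apply (hb (- z - 1)%Z). rewrite minus_IZR, opp_IZR. lra.
    - exact (proj1 (proj2 HPQ)).
    - apply (at_right_of_interval (-1) d _ Hd), HNC. }
  assert (HN0 : forall x, peval N x = 0).
  { apply (peval_eq0_of_interval N (-1) (-1 + d)); [lra |].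
    intros x Hx. rewrite HNC, HC0 by exact Hx. ring. }
  intros x. specialize (HN x). rewrite HN0 in HN. lra.
Qed.

Theorem mainTheorem15 (a : nat) (b : R) (hb : forall z : Z, b <> IZR z) :
  (exists P Q : list R, antideriv_rep a b P Q) /\
  (forall P Q : list R, antideriv_rep a b P Q -> rho_of P Q b 1 = nu a b).
Proof.
  pose proof (not_nonpos_int_of_noninteger _ (noninteger_succ _ hb)) as Hb.
  split.
  - destruct (rho_poly_is_poly a b) as [p Hp].
    exists p, (1 :: nil). exact (antideriv_rep_rho_poly a b p Hb Hp).
  - intros P Q HPQ.
    unfold rho_of. rewrite (antideriv_rep_eq_rho_poly a b P Q hb HPQ 1), <- (rho_poly_at_1 a b Hb).
    replace (1 + 1) with 2 by ring. field. exact (proj1 HPQ).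
Qed.
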